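(* Let $S$ be a monoid. Every Rees artinian right $S$-act has only finitely many maximal (proper) subacts.
   Context: A right $S$-act is Rees artinian if its set of subacts satisfies the descending chain condition. A maximal subact is a proper subact not properly contained in any other proper subact. *)

From mathcomp Require Import all_boot.
From mathcomp Require Import boolp classical_sets cardinality.
Set Implicit Arguments. Unset Strict Implicit. Unset Printing Implicit Defensive.
Local Open Scope classical_set_scope.

Record monoid := Monoid {
  m_car :> Type;
  m_mul : m_car -> m_car -> m_car;
  m_one : m_car;
  m_mulA : forall x y z, m_mul x (m_mul y z) = m_mul (m_mul x y) z;
  m_mul1l : forall x, m_mul m_one x = x;
  m_mulr1 : forall x, m_mul x m_one = x }.

Record ract (S : monoid) := RAct {
  ra_car :> Type;
  ra_act : ra_car -> S -> ra_car;
  ra_act1 : forall a, ra_act a (m_one S) = a;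
  ra_actM : forall a s t, ra_act (ra_act a s) t = ra_act a (m_mul s t) }.

Definition subact (S : monoid) (A : ract S) (B : set A) : Prop :=
  forall b s, B b -> B (ra_act b s).

Definition rees_artinian (S : monoid) (A : ract S) : Prop :=
  forall B : nat -> set A,
    (forall n, subact (B n)) -> (forall n, B n.+1 `<=` B n) ->
    exists N, forall n, (N <= n)%N -> B n = B N.

Definition maximal_subact (S : monoid) (A : ract S) (M : set A) : Prop :=
  subact M /\ M `<` setT /\
  forall N : set A, subact N -> N `<` setT -> M `<=` N -> N = M.

From mathcomp Require Import all_boot.
From mathcomp Require Import boolp classical_sets cardinality functions.
Set Implicit Arguments. Unset Strict Implicit. Unset Printing Implicit Defensive.
Local Open Scope classical_set_scope.

(* Two distinct maximal subacts M, M' of a right S-act A cover A: the union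
   M `|` M' is a subact containing M, so by maximality it is either M itself
   (and then M' <= M forces M' = M) or the whole act.  Consequently, if M is
   maximal and differs from every member of a family (F i) of maximal subacts,
   each point outside M lies in every F i, so A = (\bigcap_i F i) `|` M and the
   intersection \bigcap_i F i cannot be contained in the proper subact M.
   For the theorem, assume there are infinitely many maximal subacts and
   enumerate pairwise distinct ones M_0, M_1, ...  The finite intersections
   B_n = M_0 `&` ... `&` M_n form a descending chain of subacts; by the
   descending chain condition B_(N+1) = B_N for some N, i.e. B_N <= M_(N+1),
   which the previous observation forbids. *)

Section MaximalSubacts.
Variables (S : monoid) (A : ract S).

Lemma subactU (M N : set A) : subact M -> subact N -> subact (M `|` N).
Proof. by move=> sM sN b s [Mb|Nb]; [left; apply: sM | right; apply: sN]. Qed.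

Lemma subact_bigcap (I : Type) (P : set I) (F : I -> set A) :
  (forall i, P i -> subact (F i)) -> subact (\bigcap_(i in P) F i).
Proof. by move=> sF b s Fb i Pi; apply: sF (Fb i Pi). Qed.

Lemma maximal_subact_cover (M M' : set A) :
  maximal_subact M -> maximal_subact M' -> M <> M' -> M `|` M' = setT.
Proof.
move=> [sM [_ maxM]] [sM' [_ maxM']] neqMM'.
apply: contrapT => MUM'_neqT.
have MUM'_proper : M `|` M' `<` setT.
  by split=> // sTMUM'; apply: MUM'_neqT; apply/seteqP; split.
have MUM'_eq : M `|` M' = M.
  by apply: maxM (subactU sM sM') MUM'_proper (fun y My => or_introl My).
apply: neqMM'; apply: maxM' sM _ _; first by rewrite -MUM'_eq.
by move=> y M'y; rewrite -MUM'_eq; right.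
Qed.

Lemma maximal_subact_bigcap_not_sub (I : Type) (P : set I) (F : I -> set A)
    (M : set A) :
  (forall i, P i -> maximal_subact (F i)) -> maximal_subact M ->
  (forall i, P i -> F i <> M) -> ~ \bigcap_(i in P) F i `<=` M.
Proof.
move=> maxF maxM neqFM capF_sub_M; have [_ [[_ notT_sub_M] _]] := maxM.
apply: notT_sub_M => x _; have [//|notMx] := pselect (M x).
apply: capF_sub_M => i Pi.
have : (F i `|` M) x.
  by rewrite (maximal_subact_cover (maxF i Pi) maxM (neqFM i Pi)).
by case.
Qed.

End MaximalSubacts.

Lemma infinite_injective_seq (U : pointedType) (X : set U) :
  infinite_set X -> exists2 g : nat -> U, (forall n, X (g n)) & injective g.
Proof.
move=> /infiniteP/pcard_leP [f]; exists f => [n | m n fmn].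
  exact: ('funS_f (I : [set: nat] n)).
exact: ('inj_f (in_setT m) (in_setT n) fmn).
Qed.

Theorem mainTheorem9 (S : monoid) (A : ract S) :
  rees_artinian A -> finite_set [set M : set A | maximal_subact M].
Proof.
move=> reesA; apply: contrapT => /infinite_injective_seq [Max maxMax injMax].
pose B n := \bigcap_(i < n.+1) Max i.
have subactB n : subact (B n).
  by apply: subact_bigcap => i _; case: (maxMax i).
have decrB n : B n.+1 `<=` B n.
  by move=> x Bx i /= lti; apply: Bx; rewrite /= ltnS ltnW.
have [N stableB] := reesA B subactB decrB.
apply: (@maximal_subact_bigcap_not_sub _ _ _ `I_N.+1 Max (Max N.+1)).
- by move=> i _; apply: maxMax.
- exact: maxMax.
- by move=> i /= lti /injMax eqi; rewrite eqi ltnn in lti.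
- move=> x BNx; have : B N.+1 x by rewrite stableB.
  by apply; rewrite /=.
Qed.
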